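(* Let $\mathcal{B}=\langle V,F,E\rangle$ be any finite bipartite graph and $W\subseteq V$. Then Algorithm 3 (causal ordering via coarse decomposition) applied to $(W,\mathcal{B})$ is well-defined and its output directed cluster graph is unique, i.e. it does not depend on the choice of the maximum matching nor on the choices made in computing the causal ordering graph of the complete part.
   Context: A bipartite graph $\mathcal{B}=\langle V,F,E\rangle$ has disjoint vertex sets $V,F$ and undirected edges $(v-f)$, $v\in V$, $f\in F$; $\mathrm{adj}_{\mathcal{B}}(X)$ is the set of vertices adjacent to some vertex of $X$. $F'\subseteq F$ is self-contained if $|F'|=|\mathrm{adj}_{\mathcal{B}}(F')|$ and $|F''|\le|\mathrm{adj}_{\mathcal{B}}(F'')|$ for all $F''\subseteq F'$; $\mathcal{B}$ is self-contained if $|F|=|V|$ and $F$ is self-contained; a non-empty self-contained set is minimal self-contained if no non-empty strict subset is self-contained. A matching is a set of edges without common endpoints; a maximum matching is one of maximal cardinality. For a matching $M$, an alternating path is a sequence of distinct vertices (possibly a single vertex) in which consecutive vertices are adjacent and the edges used alternate between edges not in $M$ and edges in $M$. A directed cluster graph is a pair $\langle\mathcal{V},\mathcal{E}\rangle$ with $\mathcal{V}$ a partition of a vertex set and $\mathcal{E}$ a set of edges $x\to C$ from vertices to clusters; $\mathrm{cl}_{\mathcal{V}}(x)$ is the cluster containing $x$. Algorithm 1 (input $W$ and $\mathcal{B}$ with the subgraph induced by $(V\setminus W)\cup F$ self-contained): initialize $\mathcal{E}=\emptyset$, $\mathcal{V}=\{\{w\}:w\in W\}$, $\mathcal{B}'=\langle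 V',F',E'\rangle$ the subgraph induced by $(V\setminus W)\cup F$; while $\mathcal{B}'$ is non-null: choose a minimal self-contained $S_F\subseteq F'$ in $\mathcal{B}'$, let $C=S_F\cup\mathrm{adj}_{\mathcal{B}'}(S_F)$, add $C$ to $\mathcal{V}$, add $v\to C$ for every $v\in\mathrm{adj}_{\mathcal{B}}(S_F)\setminus\mathrm{adj}_{\mathcal{B}'}(S_F)$, and replace $\mathcal{B}'$ by its subgraph induced by $(V'\cup F')\setminus C$. Output $\langle\mathcal{V},\mathcal{E}\rangle$. Coarse decomposition of a bipartite graph $\mathcal{B}'$ w.r.t. a maximum matching $M$: let $V_{\mathrm{un}},F_{\mathrm{un}}$ be the vertices of the variable side and of the constraint side left unmatched by $M$; $T_I$ is the set of vertices joined by an alternating path to some vertex of $V_{\mathrm{un}}$, $T_O$ the set of vertices joined by an alternating path to some vertex of $F_{\mathrm{un}}$, and $T_C$ the remaining vertices. Algorithm 3 (input $W\subseteq V$, $\mathcal{B}$): let $\mathcal{B}'$ be the subgraph of $\mathcal{B}$ induced by $(V\setminus W)\cup F$; choose a maximum matching $M$ of $\mathcal{B}'$; let $\langle T_I,T_C,T_O\rangle$ be the coarse decomposition of $\mathcal{B}'$ w.r.t. $M$ and $\mathcal{B}_I,\mathcal{B}_C,\mathcal{B}_O$ the subgraphs of $\mathcal{B}'$ induced by $T_I,T_C,T_O$. Let $\langle\mathcal{V}_C,\mathcal{E}_C\rangle$ be the output of Algorithm 1 on $\mathcal{B}_C$ with no exogenous vertices; $\mathcal{V}_I$, $\mathcal{V}_O$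 the partitions of $T_I$, $T_O$ into vertex sets of connected components of $\mathcal{B}_I$, $\mathcal{B}_O$. Set $\mathcal{V}=\mathcal{V}_I\cup\mathcal{V}_C\cup\mathcal{V}_O\cup\{\{w\}:w\in W\}$ and $\mathcal{E}=\mathcal{E}_C$; for each $(v-f)\in E$: if $v\in(T_O\cup T_C)\cap V$ and $f\in T_I\cap F$, add $v\to\mathrm{cl}_{\mathcal{V}}(f)$; else if $v\in T_O\cap V$ and $f\in T_C\cap F$, add $v\to\mathrm{cl}_{\mathcal{V}}(f)$. For each $w\in W$ add $w\to\mathrm{cl}_{\mathcal{V}}(f)$ for all $f\in\mathrm{adj}_{\mathcal{B}}(w)$. Output $\langle\mathcal{V},\mathcal{E}\rangle$. *)

(* Vertices of B are
   elements of the sum type V + F (inl = variable side, inr = constraint side).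
   Induced subgraphs are represented by their vertex set S : {set (V + F)}. *)
From Stdlib Require Import ClassicalDescription.
From mathcomp Require Import all_boot.
Set Implicit Arguments. Unset Strict Implicit. Unset Printing Implicit Defensive.

Section Bip.
Variables (V F : finType) (E : V -> F -> bool).

Definition vtx := (V + F)%type.

Definition adjv (x y : vtx) : bool :=
  match x, y with
  | inl v, inr f => E v f
  | inr f, inl v => E v f
  | _, _ => false
  end.

Definition isF (x : vtx) : bool := if x is inr _ then true else false.
Definition isV (x : vtx) : bool := if x is inl _ then true else false.

Definition adjS (S X : {set vtx}) : {set vtx} :=
  [set y in S | [exists x in X, adjv x y]].

Definition self_contained (S X : {set vtx}) : Prop :=
  [/\ X \subset [set x in S | isF x],
      #|X| = #|adjS S X|
    & forall Y : {set vtx}, Y \subset X -> #|Y| <= #|adjS S Y|].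

Definition min_self_contained (S X : {set vtx}) : Prop :=
  [/\ X != set0, self_contained S X
    & forall Y : {set vtx}, Y \proper X -> Y != set0 -> ~ self_contained S Y].

Definition graph_self_contained (S : {set vtx}) : Prop :=
  #|[set x in S | isF x]| = #|[set x in S | isV x]| /\
  self_contained S [set x in S | isF x].

(* Directed cluster graphs: a partition (set of clusters) and a set of
   edges x -> C. *)
Definition dcg := ({set {set vtx}} * {set (vtx * {set vtx})})%type.

(* Algorithm 1.  G : vertex set of the input graph B; the state is the vertex
   set S of the current B', the clusters and the edges built so far.
   alg1_run G S Vc Ec out : "starting from state (S,Vc,Ec), some sequence of
   choices of minimal self-contained sets leads to the output out". *)
Inductive alg1_run (G : {set vtx}) :
  {set vtx} -> {set {set vtx}} -> {set (vtx * {set vtx})} -> dcg -> Prop :=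
| alg1_done Vc Ec : alg1_run G set0 Vc Ec (Vc, Ec)
| alg1_step S Vc Ec SF out :
    S != set0 ->
    min_self_contained S SF ->
    let C := SF :|: adjS S SF in
    alg1_run G (S :\: C) (C |: Vc)
       (Ec :|: [set (x, C) | x in adjS G SF :\: adjS S SF]) out ->
    alg1_run G S Vc Ec out.

Definition alg1_out (G : {set vtx}) (W : {set V}) (out : dcg) : Prop :=
  alg1_run G (G :\: [set inl w | w in W])
    [set [set (inl w : vtx)] | w in W] set0 out.

Variable W : {set V}.

Definition Bp : {set vtx} :=
  [set x : vtx | match x with inl v => v \notin W | inr _ => true end].

Definition adjBp (x y : vtx) : bool := [&& x \in Bp, y \in Bp & adjv x y].

Definition matching (M : {set (V * F)}) : Prop :=
  (forall p, p \in M -> E p.1 p.2 && (p.1 \notin W)) /\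
  (forall p q, p \in M -> q \in M -> (p.1 = q.1 \/ p.2 = q.2) -> p = q).

Definition max_matching (M : {set (V * F)}) : Prop :=
  matching M /\ forall M', matching M' -> #|M'| <= #|M|.

Definition inM (M : {set (V * F)}) (x y : vtx) : bool :=
  match x, y with
  | inl v, inr f => (v, f) \in M
  | inr f, inl v => (v, f) \in M
  | _, _ => false
  end.

Definition alt_path (M : {set (V * F)}) (p : seq vtx) : Prop :=
  [/\ p != [::], uniq p,
      all (fun x => x \in Bp) p,
      (forall i x0, i.+1 < size p -> adjBp (nth x0 p i) (nth x0 p i.+1))
    & (forall i x0, i.+2 < size p ->
         inM M (nth x0 p i) (nth x0 p i.+1) != inM M (nth x0 p i.+1) (nth x0 p i.+2))].

Definition alt_reach (M : {set (V * F)}) (U : {set vtx}) (x : vtx) : Prop :=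
  exists u p, [/\ u \in U, alt_path M (u :: p) & last u p = x].

Definition Vun (M : {set (V * F)}) : {set vtx} :=
  [set inl v | v in [set v : V | (v \notin W) && [forall f, (v, f) \notin M]]].
Definition Fun (M : {set (V * F)}) : {set vtx} :=
  [set inr f | f in [set f : F | [forall v, (v, f) \notin M]]].

Definition decP (P : Prop) : bool := if excluded_middle_informative P then true else false.
Definition TI M : {set vtx} := [set x in Bp | decP (alt_reach M (Vun M) x)].
Definition TO M : {set vtx} := [set x in Bp | decP (alt_reach M (Fun M) x)].
Definition TC M : {set vtx} := Bp :\: (TI M :|: TO M).

Definition induced_rel (T : {set vtx}) : rel vtx :=
  fun x y => [&& x \in T, y \in T & adjv x y].
Definition components (T : {set vtx}) : {set {set vtx}} :=
  [set [set y in T | connect (induced_rel T) x y] | x in T].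

(* Algorithm 3 output, given the matching M and the output outC of
   Algorithm 1 on B_C with no exogenous vertices *)
Definition alg3_build (M : {set (V * F)}) (outC : dcg) : dcg :=
  let Vcl := components (TI M) :|: outC.1 :|: components (TO M)
             :|: [set [set (inl w : vtx)] | w in W] in
  let cl := pblock Vcl in
  let cond v f :=
    E v f &&
    ((((inl v : vtx) \in TO M :|: TC M) && ((inr f : vtx) \in TI M)) ||
     (((inl v : vtx) \in TO M) && ((inr f : vtx) \in TC M))) in
  (Vcl,
   outC.2
   :|: [set ((inl vf.1 : vtx), cl (inr vf.2)) | vf in [set vf : V * F | cond vf.1 vf.2]]
   :|: [set ((inl vf.1 : vtx), cl (inr vf.2)) | vf in [set vf : V * F | (vf.1 \in W) && E vf.1 vf.2]]).

Definition alg3_out (out : dcg) : Prop :=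
  exists M outC, [/\ max_matching M, alg1_out (TC M) set0 outC & out = alg3_build M outC].

End Bip.

(* T_I and T_O consist of the vertices reachable by M-alternating paths from
   unmatched variables, resp. unmatched constraints.  For a maximum matching M
   let A be the reachable vertices on the side of these roots: mate is
   injective from the neighbourhood N(A) into the matched part of A, so
   |A| = |N(A)| + #(unmatched roots), whereas every matching M' satisfies
   |X| <= |N(X)| + #(roots unmatched by M') for X on the root side.  Applied
   to the two matchings, these bounds show that the alternating trees of any
   other maximum matching stay in A u N(A); hence the coarse decomposition does
   not depend on M.  T_C is perfectly matched, hence self-contained.  In a
   self-contained graph two distinct minimal self-contained sets are disjoint
   with disjoint neighbourhoods, so removing one keeps the other minimal with
   the same cluster: the choices of Algorithm 1 commute, and induction on the
   size of the graph shows that all its runs produce the same output. *)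

From Pilot Require Import Defs.
From mathcomp Require Import all_boot zify.
From Stdlib Require Import ClassicalDescription.
Set Implicit Arguments. Unset Strict Implicit. Unset Printing Implicit Defensive.

Lemma decPP (P : Prop) : reflect P (Defs.decP P).
Proof. by rewrite /Defs.decP; case: (excluded_middle_informative P) => h; constructor. Qed.

Section SelfContained.
Variables (V F : finType) (E : V -> F -> bool).
Local Notation vtx := (vtx V F).
Local Notation adjS := (adjS E).
Implicit Types (S T C X Y : {set vtx}) (x y : vtx).

Definition Fside S := [set x in S | isF x].
Definition Vside S := [set x in S | isV x].

Definition hall_balanced S :=
  #|Fside S| = #|Vside S| /\ forall Y, Y \subset Fside S -> #|Y| <= #|adjS S Y|.

Lemma isFE x : isF x = ~~ isV x.
Proof. by case: x. Qed.

Lemma adjvC x y : adjv E x y = adjv E y x.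
Proof. by case: x; case: y. Qed.

Lemma adjv_isV x y : adjv E x y -> isV y = ~~ isV x.
Proof. by case: x => ?; case: y. Qed.

Lemma Fside_Vside S : Fside S :|: Vside S = S.
Proof. by apply/setP => x; rewrite !inE -andb_orr isFE orNb andbT. Qed.

Lemma Fside_sub S : Fside S \subset S.
Proof. by apply/subsetP => x /setIdP[]. Qed.

Lemma Vside_sub S : Vside S \subset S.
Proof. by apply/subsetP => x /setIdP[]. Qed.

Lemma disjoint_Fside_Vside S T : [disjoint Fside S & Vside T].
Proof.
rewrite -setI_eq0; apply/eqP/setP => x.
by rewrite !inE isFE; case: (isV x); rewrite !andbF.
Qed.

Lemma adjSU S X Y : adjS S (X :|: Y) = adjS S X :|: adjS S Y.
Proof.
apply/setP => x; rewrite !inE -andb_orr; congr (_ && _).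
apply/existsP/orP => [[y /andP[/setUP[] yX a]]|[]/existsP[y /andP[yX a]]].
- by left; apply/existsP; exists y; rewrite yX.
- by right; apply/existsP; exists y; rewrite yX.
- by exists y; rewrite inE yX.
- by exists y; rewrite inE yX orbT.
Qed.

Lemma adjSS S X Y : X \subset Y -> adjS S X \subset adjS S Y.
Proof.
move=> XY; apply/subsetP => x; rewrite !inE => /andP[-> /existsP[y /andP[yX a]]].
by apply/existsP; exists y; rewrite (subsetP XY).
Qed.

Lemma adjS_setD S C X : adjS (S :\: C) X = adjS S X :\: C.
Proof. by apply/setP => x; rewrite !inE andbA [(x \notin C) && _]andbC. Qed.

Lemma adjS_Vside S T X : X \subset Fside T -> adjS S X \subset Vside S.
Proof.
move=> XF; apply/subsetP => x; rewrite !inE => /andP[-> /existsP[y /andP[/(subsetP XF)]]].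
by rewrite inE => /andP[_]; case: y => // f _; case: x.
Qed.

Lemma self_containedE S X : hall_balanced S ->
  self_contained E S X <-> X \subset Fside S /\ #|X| = #|adjS S X|.
Proof.
move=> [_ hall]; split => [[]|[XF tX]] //; split=> // Y YX.
exact/hall/(subset_trans YX).
Qed.

Lemma graph_self_containedE S : graph_self_contained E S <-> hall_balanced S.
Proof.
split => [[bal [_ _ hall]]|[bal hall]]; first by split.
split=> //; apply/self_containedE => //; split=> //.
apply/eqP; rewrite eqn_leq hall //= bal subset_leq_card //.
exact: adjS_Vside (subxx _).
Qed.

Lemma min_self_contained_neq0 S X : min_self_contained E S X -> S != set0.
Proof.
case=> /set0Pn[x xX] [XF _ _] _; apply/set0Pn; exists x.
exact: subsetP (Fside_sub S) x (subsetP XF x xX).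
Qed.

Lemma min_self_contained_tight S X : hall_balanced S -> min_self_contained E S X ->
  X \subset Fside S /\ #|X| = #|adjS S X|.
Proof. by move=> bal [_ /(self_containedE _ bal)]. Qed.

Lemma min_self_contained_exists S : hall_balanced S -> S != set0 ->
  exists X, min_self_contained E S X.
Proof.
move=> bal nS.
pose P := [pred X : {set vtx} | (X != set0) && Defs.decP (self_contained E S X)].
have [|X /minsetP[/andP[nX /decPP scX] minX]] := ex_minset (P := P).
  exists (Fside S); rewrite inE; apply/andP; split.
    apply: contraNneq nS => F0; move: bal.1; rewrite F0 cards0 => /esym/eqP.
    by rewrite cards_eq0 => /eqP V0; rewrite -(Fside_Vside S) F0 V0 setU0.
  by apply/decPP; case/graph_self_containedE: bal => _ [].
exists X; split=> // Y /andP[YX nXY] nY scY.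
have PY : P Y by rewrite inE nY; apply/decPP.
by rewrite (minX Y PY YX) subxx in nXY.
Qed.

Lemma card_adjSI_le S X Y : hall_balanced S ->
  X \subset Fside S -> #|X| = #|adjS S X| ->
  Y \subset Fside S -> #|Y| = #|adjS S Y| ->
  #|adjS S X :&: adjS S Y| <= #|X :&: Y|.
Proof.
move=> [_ hall] XF tX YF tY.
have := hall (X :|: Y); rewrite subUset XF YF adjSU => /(_ isT).
by have := cardsUI X Y; have := cardsUI (adjS S X) (adjS S Y); lia.
Qed.

Lemma min_self_contained_eq_or_disjoint S X Y : hall_balanced S ->
  min_self_contained E S X -> min_self_contained E S Y ->
  X = Y \/ [disjoint X & Y] /\ [disjoint adjS S X & adjS S Y].
Proof.
move=> bal mX mY; have [XF tX] := min_self_contained_tight bal mX.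
have [YF tY] := min_self_contained_tight bal mY.
have le := card_adjSI_le bal XF tX YF tY.
have [XY0|nXY] := eqVneq (X :&: Y) set0.
  right; rewrite -!setI_eq0 XY0 eqxx; split=> //.
  by rewrite -cards_eq0 -leqn0 -(cards0 vtx) -XY0.
have XYF : X :&: Y \subset Fside S by rewrite (subset_trans (subsetIl _ _)).
have scXY : self_contained E S (X :&: Y).
  apply/self_containedE => //; split=> //; apply/eqP; rewrite eqn_leq bal.2 //=.
  by apply: leq_trans le; rewrite subset_leq_card // subsetI !adjSS ?subsetIl ?subsetIr.
have minI Z : min_self_contained E S Z -> X :&: Y \subset Z -> X :&: Y = Z.
  case=> _ _ minZ sub; apply/eqP; apply: contraT => neq.
  by case: (minZ (X :&: Y)); rewrite // properEneq neq.
by left; rewrite -(minI X mX (subsetIl _ _)) (minI Y mY (subsetIr _ _)).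
Qed.

Definition cluster S X := X :|: adjS S X.

Lemma Fside_setD S C : Fside (S :\: C) = Fside S :\: C.
Proof. by apply/setP => x; rewrite !inE andbA. Qed.

Lemma Vside_setD S C : Vside (S :\: C) = Vside S :\: C.
Proof. by apply/setP => x; rewrite !inE andbA. Qed.

Lemma Fside_setD_cluster S X : X \subset Fside S ->
  Fside (S :\: cluster S X) = Fside S :\: X.
Proof.
move=> XF; rewrite Fside_setD -setDDl; apply/setDidPl.
by rewrite (disjointWl (subsetDl _ _)) // (disjointWr (adjS_Vside S XF)) // disjoint_Fside_Vside.
Qed.

Lemma Vside_setD_cluster S X : X \subset Fside S ->
  Vside (S :\: cluster S X) = Vside S :\: adjS S X.
Proof.
move=> XF; rewrite Vside_setD -setDDl; congr (_ :\: _); apply/setDidPl.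
by rewrite disjoint_sym (disjointWl XF) // disjoint_Fside_Vside.
Qed.

Lemma adjS_setD_cluster S X Y : X \subset Fside S -> Y \subset Fside S ->
  adjS (S :\: cluster S X) Y = adjS S Y :\: adjS S X.
Proof.
move=> XF YF; rewrite adjS_setD -setDDl; congr (_ :\: _); apply/setDidPl.
by rewrite disjoint_sym (disjointWl XF) // (disjointWr (adjS_Vside S YF)) // disjoint_Fside_Vside.
Qed.

Lemma hall_balanced_setD S X : hall_balanced S ->
  X \subset Fside S -> #|X| = #|adjS S X| -> hall_balanced (S :\: cluster S X).
Proof.
move=> [bal hall] XF tX; rewrite /hall_balanced Fside_setD_cluster // Vside_setD_cluster //.
split; first by rewrite !cardsD (setIidPr XF) (setIidPr (adjS_Vside S XF)) bal tX.
move=> Y; rewrite subsetD => /andP[YF dYX]; rewrite adjS_setD_cluster //.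
have := hall (Y :|: X); rewrite subUset YF XF adjSU => /(_ isT).
have /eqP YX0 : Y :&: X == set0 by rewrite setI_eq0.
have := cardsUI Y X; have := cardsUI (adjS S Y) (adjS S X).
by have := cardsID (adjS S X) (adjS S Y); rewrite YX0 cards0; lia.
Qed.

Lemma min_self_contained_setD S X1 X2 : hall_balanced S ->
  min_self_contained E S X1 -> min_self_contained E S X2 -> X1 != X2 ->
  adjS (S :\: cluster S X1) X2 = adjS S X2 /\
  min_self_contained E (S :\: cluster S X1) X2.
Proof.
move=> bal m1 m2 neqX.
have [eqX|[dX dN]] := min_self_contained_eq_or_disjoint bal m1 m2.
  by rewrite eqX eqxx in neqX.
have [X1F t1] := min_self_contained_tight bal m1.
have [X2F t2] := min_self_contained_tight bal m2.
have bal1 := hall_balanced_setD bal X1F t1.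
have adjE Y : Y \subset X2 -> adjS (S :\: cluster S X1) Y = adjS S Y.
  move=> YX2; rewrite adjS_setD_cluster ?(subset_trans YX2) //; apply/setDidPl.
  by rewrite disjoint_sym (disjointWr (adjSS S YX2)).
have scE Y : Y \subset X2 ->
    self_contained E (S :\: cluster S X1) Y <-> self_contained E S Y.
  move=> YX2; have YF : Y \subset Fside S := subset_trans YX2 X2F.
  have YF1 : Y \subset Fside (S :\: cluster S X1).
    by rewrite Fside_setD_cluster // subsetD YF (disjointWl YX2) // disjoint_sym.
  split=> [ /(self_containedE _ bal1)[_ tY] | /(self_containedE _ bal)[_ tY] ].
    by apply/(self_containedE _ bal); rewrite -adjE.
  by apply/(self_containedE _ bal1); rewrite adjE.
split; first exact: adjE.
case: m2 => nX2 sc2 min2; split=> //; first exact/scE.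
by move=> Y pY nY /(scE Y (proper_sub pY)); apply: min2.
Qed.

Definition cluster_edges G S X := [set (x, cluster S X) | x in adjS G X :\: adjS S X].

Lemma alg1_run_inv G S Vc Ec out : alg1_run E G S Vc Ec out ->
  S = set0 /\ out = (Vc, Ec) \/
  exists2 X, min_self_contained E S X &
    alg1_run E G (S :\: cluster S X) (cluster S X |: Vc) (Ec :|: cluster_edges G S X) out.
Proof. by case=> [|{}S {}Vc {}Ec X {}out _ mX run]; [left | right; exists X]. Qed.

Lemma alg1_out0E G out : alg1_out E G set0 out <-> alg1_run E G G set0 set0 out.
Proof. by rewrite /alg1_out !imset0 setD0. Qed.

Lemma alg1_run_step G S Vc Ec X out : min_self_contained E S X ->
  alg1_run E G (S :\: cluster S X) (cluster S X |: Vc) (Ec :|: cluster_edges G S X) out ->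
  alg1_run E G S Vc Ec out.
Proof. by move=> mX; apply: alg1_step (min_self_contained_neq0 mX) mX. Qed.

Lemma card_setD_cluster_lt S X : min_self_contained E S X -> #|S :\: cluster S X| < #|S|.
Proof.
case=> /set0Pn[x xX] [XF _ _] _; have xS := subsetP (Fside_sub S) x (subsetP XF x xX).
apply: proper_card; rewrite properEneq subsetDl andbT; apply/negP => /eqP/setP/(_ x).
by rewrite !inE xX xS.
Qed.

Lemma alg1_run_exists G S Vc Ec : hall_balanced S -> exists out, alg1_run E G S Vc Ec out.
Proof.
have [n] := ubnP #|S|; elim: n S Vc Ec => // n IHn S Vc Ec ltSn bal.
have [->|nS] := eqVneq S set0; first by exists (Vc, Ec); constructor.
have [X mX] := min_self_contained_exists bal nS.
have [XF tX] := min_self_contained_tight bal mX.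
have ltS := card_setD_cluster_lt mX.
have [|out run] := IHn _ (cluster S X |: Vc) (Ec :|: cluster_edges G S X) _
  (hall_balanced_setD bal XF tX); first by lia.
by exists out; apply: alg1_run_step run.
Qed.

Lemma alg1_run_after_setD G S Vc Ec X1 X2 out : hall_balanced S ->
  min_self_contained E S X1 -> min_self_contained E S X2 -> X1 != X2 ->
  alg1_run E G (S :\: cluster S X1 :\: cluster S X2) (cluster S X2 |: (cluster S X1 |: Vc))
    (Ec :|: cluster_edges G S X1 :|: cluster_edges G S X2) out ->
  alg1_run E G (S :\: cluster S X1) (cluster S X1 |: Vc) (Ec :|: cluster_edges G S X1) out.
Proof.
move=> bal m1 m2 neqX run; have [e21 m21] := min_self_contained_setD bal m1 m2 neqX.
have cl21 : cluster (S :\: cluster S X1) X2 = cluster S X2 by rewrite /cluster e21.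
have ed21 : cluster_edges G (S :\: cluster S X1) X2 = cluster_edges G S X2.
  by rewrite /cluster_edges cl21 e21.
by apply: (alg1_run_step m21); rewrite cl21 ed21.
Qed.

Lemma alg1_run_diamond G S Vc Ec X1 X2 : hall_balanced S ->
  min_self_contained E S X1 -> min_self_contained E S X2 -> X1 != X2 ->
  exists out,
    alg1_run E G (S :\: cluster S X1) (cluster S X1 |: Vc) (Ec :|: cluster_edges G S X1) out /\
    alg1_run E G (S :\: cluster S X2) (cluster S X2 |: Vc) (Ec :|: cluster_edges G S X2) out.
Proof.
move=> bal m1 m2 neqX; have [X1F t1] := min_self_contained_tight bal m1.
have bal1 := hall_balanced_setD bal X1F t1.
have [e21 m21] := min_self_contained_setD bal m1 m2 neqX.
have [X2F' t2'] := min_self_contained_tight bal1 m21.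
have cl21 : cluster (S :\: cluster S X1) X2 = cluster S X2 by rewrite /cluster e21.
have := hall_balanced_setD bal1 X2F' t2'; rewrite cl21 => bal12.
have [out run] := alg1_run_exists G (cluster S X2 |: (cluster S X1 |: Vc))
  (Ec :|: cluster_edges G S X1 :|: cluster_edges G S X2) bal12.
exists out; split; first exact: alg1_run_after_setD bal m1 m2 neqX run.
apply: (alg1_run_after_setD bal m2 m1); first by rewrite eq_sym.
by rewrite setUCA setUAC setDDl setUC -setDDl.
Qed.

Lemma alg1_run_unique G S Vc Ec o1 o2 : hall_balanced S ->
  alg1_run E G S Vc Ec o1 -> alg1_run E G S Vc Ec o2 -> o1 = o2.
Proof.
have [n] := ubnP #|S|; elim: n S Vc Ec o1 o2 => // n IHn S Vc Ec o1 o2 ltSn bal r1 r2.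
case: (alg1_run_inv r1) (alg1_run_inv r2) => {r1 r2} [[S0 ->]|[X1 m1 r1]] [[S0' ->]|[X2 m2 r2]] //.
- by have := min_self_contained_neq0 m2; rewrite S0 eqxx.
- by have := min_self_contained_neq0 m1; rewrite S0' eqxx.
have IH X Vc' Ec' o o' : min_self_contained E S X ->
    alg1_run E G (S :\: cluster S X) Vc' Ec' o ->
    alg1_run E G (S :\: cluster S X) Vc' Ec' o' -> o = o'.
  move=> mX; have [XF tX] := min_self_contained_tight bal mX.
  apply: (IHn _ _ _ _ _ _ (hall_balanced_setD bal XF tX)).
  by have := card_setD_cluster_lt mX; lia.
have [eX|neqX] := eqVneq X1 X2; first by move: r2; rewrite -eX; exact: IH m1 r1.
have [o [r1' r2']] := alg1_run_diamond G Vc Ec bal m1 m2 neqX.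
by rewrite (IH _ _ _ _ _ m1 r1 r1') (IH _ _ _ _ _ m2 r2 r2').
Qed.

End SelfContained.

Section Matching.
Variables (V F : finType) (E : V -> F -> bool) (W : {set V}).
Local Notation vtx := (vtx V F).
Local Notation Bp := (Bp F W).
Local Notation adjBp := (adjBp E W).
Local Notation alt_path := (alt_path E W).
Local Notation matching := (matching E W).
Implicit Types (M : {set (V * F)}) (X Z : {set vtx}) (x y z u : vtx) (p : seq vtx) (b : bool).

Lemma inMC M x y : inM M x y = inM M y x.
Proof. by case: x; case: y. Qed.

Lemma adjBpC x y : adjBp x y = adjBp y x.
Proof. by rewrite /adjBp adjvC andbCA. Qed.

Lemma adjBp_isV x y : adjBp x y -> isV y = ~~ isV x.
Proof. by case/and3P => _ _; apply: adjv_isV. Qed.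

Lemma adjBp_Bp x y : adjBp x y -> x \in Bp /\ y \in Bp.
Proof. by case/and3P. Qed.

Lemma inM_adjBp M x y : matching M -> inM M x y -> adjBp x y.
Proof.
case=> mE _; case: x => [v|f]; case: y => [w|g] //= /mE /andP[e nW];
  by rewrite /adjBp /= !inE e nW.
Qed.

Lemma inM_unique M x y z : matching M -> inM M x y -> inM M x z -> y = z.
Proof.
case=> _ mU; case: x => [v|f]; case: y => [w|g] //; case: z => [w'|g'] //= yM zM.
  by case: (mU _ _ yM zM (or_introl erefl)) => ->.
by case: (mU _ _ yM zM (or_intror erefl)) => ->.
Qed.

Definition matched M x := [exists y, inM M x y].

Definition mate M x : vtx := odflt x [pick y | inM M x y].

Lemma mate_inM M x : matched M x -> inM M x (mate M x).
Proof. by case/existsP => y xy; rewrite /mate; case: pickP => [//|/(_ y)]; rewrite xy. Qed.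

Lemma mateP M x y : matching M -> inM M x y -> mate M x = y.
Proof.
move=> mM xy; have mx : matched M x by apply/existsP; exists y.
exact: inM_unique mM (mate_inM mx) xy.
Qed.

Lemma mateK M x : matching M -> matched M x -> mate M (mate M x) = x.
Proof. by move=> mM /mate_inM h; apply: (mateP mM); rewrite inMC. Qed.

Lemma mate_inj M : matching M -> {in matched M &, injective (mate M)}.
Proof. by move=> mM x y mx my e; rewrite -(mateK mM mx) -(mateK mM my) e. Qed.

Lemma matched_inl M v : matched M (inl v) = [exists g, (v, g) \in M].
Proof. by apply/existsP/existsP => [[[w|g] //]|[g]]; [exists g | exists (inr g)]. Qed.

Lemma matched_inr M f : matched M (inr f) = [exists w, (w, f) \in M].
Proof. by apply/existsP/existsP => [[[w|g] //]|[w]]; [exists w | exists (inl w)]. Qed.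

Definition unmatched b M : {set vtx} := [set x in Bp | (isV x == b) && ~~ matched M x].

Lemma unmatched_isV b M x : x \in unmatched b M -> isV x = b.
Proof. by rewrite inE => /and3P[_ /eqP]. Qed.

Lemma unmatched_inM b M x y : x \in unmatched b M -> inM M x y = false.
Proof. by rewrite inE => /and3P[_ _ /existsPn/(_ y)/negbTE]. Qed.

Lemma matched_unmatchedN b M x : matched M x -> x \notin unmatched b M.
Proof. by move=> mx; rewrite inE mx !andbF. Qed.

Lemma inl_unmatched M v :
  (inl v \in unmatched true M) = (v \notin W) && [forall g, (v, g) \notin M].
Proof. by rewrite !inE matched_inl negb_exists. Qed.

Lemma inr_unmatched M f : (inr f \in unmatched false M) = [forall w, (w, f) \notin M].
Proof. by rewrite !inE matched_inr negb_exists. Qed.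

Lemma VunE M : Vun W M = unmatched true M.
Proof.
apply/setP => -[v|f]; last by rewrite [RHS]inE andbF; apply/negbTE/imsetP => -[].
by rewrite inl_unmatched (mem_imset _ _ inl_inj) inE.
Qed.

Lemma FunE M : Fun M = unmatched false M.
Proof.
apply/setP => -[v|f]; first by rewrite [RHS]inE andbF; apply/negbTE/imsetP => -[].
by rewrite inr_unmatched (mem_imset _ _ inr_inj) inE.
Qed.

Lemma inMS M M' x y : M' \subset M -> inM M' x y -> inM M x y.
Proof. by move=> sM; case: x => ?; case: y => ? //= /(subsetP sM). Qed.

Lemma matchedS M M' x : M' \subset M -> matched M' x -> matched M x.
Proof. by move=> sM /existsP[y /(inMS sM) xy]; apply/existsP; exists y. Qed.

Lemma matchingS M M' : M' \subset M -> matching M -> matching M'.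
Proof.
move=> sM [mE mU]; split=> [p /(subsetP sM)/mE //|p q /(subsetP sM) pM /(subsetP sM)].
exact: mU.
Qed.

Lemma matchingU1 M v f : matching M -> E v f -> v \notin W ->
  ~~ matched M (inl v) -> ~~ matched M (inr f) -> matching ((v, f) |: M).
Proof.
rewrite matched_inl matched_inr => -[mE mU] e vW /existsPn nv /existsPn nf.
have fresh q : q \in M -> v = q.1 \/ f = q.2 -> False.
  by case: q => a c /= qM [va|fc]; [move: (nv c) | move: (nf a)]; rewrite ?va ?fc qM.
split=> [p /setU1P[->|/mE //]|p q /setU1P[->|pM] /setU1P[->|qM] //]; first by rewrite /= e vW.
- by move/(fresh q qM).
- by case=> e'; case: (fresh p pM); [left|right]; rewrite e'.
- exact: mU.
Qed.

Lemma matching_swap M v0 v1 f : matching M -> E v0 f -> v0 \notin W ->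
  ~~ matched M (inl v0) -> (v1, f) \in M ->
  let M' := (v0, f) |: (M :\ (v1, f)) in
  [/\ matching M', #|M'| = #|M|, ~~ matched M' (inl v1)
    & forall v g, g != f -> ((v, g) \in M') = ((v, g) \in M)].
Proof.
move=> mM e v0W nv0 v1f M'; have [_ mU] := mM.
have uniq_f w : (w, f) \in M -> w = v1 by move=> wf; case: (mU _ _ wf v1f (or_intror erefl)).
have nv0f : (v0, f) \notin M by apply: contra nv0 => h; apply/existsP; exists (inr f).
split.
- apply: matchingU1 => //; first exact: matchingS (subD1set _ _) mM.
    by apply: contra nv0; apply: matchedS (subD1set _ _).
  rewrite matched_inr; apply/existsPn => w; rewrite !inE negb_and negbK.
  by case wf: ((w, f) \in M); rewrite ?orbT // (uniq_f w wf) eqxx.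
- by rewrite cardsU1 !inE negb_and nv0f orbT (cardsD1 (v1, f) M) v1f.
- rewrite matched_inl; apply/existsPn => g; rewrite !inE negb_or negb_and negbK.
  have v10 : v1 != v0 by apply: contraNneq nv0f => <-.
  rewrite xpair_eqE (negbTE v10) /=; case v1g: ((v1, g) \in M); rewrite ?orbT //.
  by case: (mU _ _ v1g v1f (or_introl erefl)) => ->; rewrite eqxx.
- by move=> v g gf; rewrite !inE !xpair_eqE (negbTE gf) !andbF.
Qed.

Lemma alt_path_take M p k : 0 < k -> alt_path M p -> alt_path M (take k p).
Proof.
move=> k0 [np up pB adj alt]; split.
- by case: p np {up pB adj alt} => // x p _; case: k k0.
- exact: take_uniq.
- by apply/allP => x /mem_take; apply/allP: x.
- move=> i x0; rewrite size_take_min => hi; rewrite !nth_take; try lia.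
  by apply: adj; lia.
- move=> i x0; rewrite size_take_min => hi; rewrite !nth_take; try lia.
  by apply: alt; lia.
Qed.

Lemma alt_path_behead M x y p : alt_path M [:: x, y & p] -> alt_path M (y :: p).
Proof.
move=> [_ /andP[_ up] /andP[_ pB] adj alt]; split=> // i x0 hi.
- exact: (adj i.+1 x0).
- exact: (alt i.+1 x0).
Qed.

Lemma eq_alt_path M M' p : {in p &, inM M' =2 inM M} -> alt_path M p -> alt_path M' p.
Proof.
move=> eqM [np up pB adj alt]; split=> // i x0 hi.
have inp j : j <= i.+2 -> nth x0 p j \in p by move=> le_j; apply/mem_nth/(leq_ltn_trans le_j).
by rewrite !eqM ?inp ?alt //; lia.
Qed.

Lemma alt_path_rev M p : alt_path M p -> alt_path M (rev p).
Proof.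
case=> [np up pB adj alt]; split.
- by rewrite -size_eq0 size_rev size_eq0.
- by rewrite rev_uniq.
- by rewrite all_rev.
- move=> i x0; rewrite size_rev => hi; rewrite !nth_rev; try lia.
  rewrite adjBpC (_ : size p - i.+1 = (size p - i.+2).+1); last by lia.
  by apply: adj; lia.
- move=> i x0; rewrite size_rev => hi; rewrite !nth_rev; try lia.
  rewrite eq_sym inMC [X in _ != X]inMC.
  rewrite (_ : size p - i.+1 = (size p - i.+3).+2); last by lia.
  rewrite (_ : size p - i.+2 = (size p - i.+3).+1); last by lia.
  by apply: alt; lia.
Qed.

Lemma alt_path_rcons M p y : alt_path M p -> y \notin p -> y \in Bp ->
  (forall x0, adjBp (last x0 p) y) ->
  (forall x0, 1 < size p -> inM M (nth x0 p (size p).-2) (last x0 p) != inM M (last x0 p) y) ->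
  alt_path M (rcons p y).
Proof.
case=> [np up pB adj alt] yp yB adj_y alt_y.
split.
- by rewrite -size_eq0 size_rcons.
- by rewrite rcons_uniq yp.
- by rewrite all_rcons yB.
- move=> i x0; rewrite size_rcons !nth_rcons => hi.
  have [lt_i|ge_i] := ltnP i.+1 (size p); first by rewrite (ltnW lt_i); apply: adj.
  have ei : i.+1 = size p by lia.
  have hi' : i < size p by lia.
  by rewrite hi' ei eqxx; have := adj_y x0; rewrite -nth_last -ei.
- move=> i x0; rewrite size_rcons !nth_rcons => hi.
  have [lt_i|ge_i] := ltnP i.+2 (size p).
    by rewrite (ltnW lt_i) (ltnW (ltnW lt_i)); apply: alt.
  have ei : i.+2 = size p by lia.
  have hi1 : i < size p by lia.
  have hi2 : i.+1 < size p by lia.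
  rewrite hi1 hi2 ei eqxx.
  by have := alt_y x0; rewrite -!nth_last -ei /=; apply; lia.
Qed.

Lemma augmenting_path M u p : matching M -> u \in unmatched true M ->
  alt_path M (u :: p) -> last u p \in unmatched false M ->
  exists2 M', matching M' & #|M'| = #|M|.+1.
Proof.
have [n] := ubnP (size p); elim: n M u p => // n IHn M u p ltpn mM.
rewrite inE => /and3P[uB /eqP uV nu] ap lU.
case: p ltpn ap lU => [|y p] ltpn ap lU; first by move: lU; rewrite /= inE uV /= andbF.
have uy : adjBp u y by case: ap => _ _ _ adj _; exact: (adj 0 u).
case: u uB uV nu ap uy lU => [v0|//] uB _ nu ap uy lU.
case: y ltpn ap uy lU => [w|f] ltpn ap uy lU; first by case/and3P: uy.
have v0W : v0 \notin W by move: uB; rewrite inE.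
have e0 : E v0 f by case/and3P: uy.
have nv0f : (v0, f) \notin M by apply: contra nu => h; apply/existsP; exists (inr f).
case: p ltpn ap lU => [|z p] ltpn ap lU.
  exists ((v0, f) |: M); last by rewrite cardsU1 nv0f.
  by apply: matchingU1 => //; move: lU; rewrite inE => /and3P[].
have alt0 : (v0, f) \in M != inM M (inr f) z by case: ap => _ _ _ _ alt; apply: (alt 0 (inl v0)).
have fz : inM M (inr f) z by apply: contraR alt0 => /negbTE ->; rewrite (negbTE nv0f).
case: z fz ltpn ap lU {alt0} => [v1|//] fz ltpn ap lU.
(* trading (v1, f) for (v0, f) leaves an augmenting path two edges shorter *)
have [mM' cM' nv1 agree] := matching_swap mM e0 v0W nu fz.
set M' := (v0, f) |: (M :\ (v1, f)) in mM' cM' nv1 agree.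
have ap1 : alt_path M (inl v1 :: p) := alt_path_behead (alt_path_behead ap).
have fp : (inr f : vtx) \notin inl v1 :: p by case: ap => _ /= /andP[_ /andP[]].
have neq_f g : (inr g : vtx) \in inl v1 :: p -> g != f by move=> gp; apply: contraNneq fp => <-.
have eqM : {in inl v1 :: p &, inM M' =2 inM M}.
  by move=> [a|g] [a'|g'] //= ga gb; rewrite agree ?neq_f.
have [|||M'' mM'' cM''] := IHn M' (inl v1) p _ mM' _ (eq_alt_path eqM ap1).
- by move: ltpn => /=; lia.
- by case: ap1 => _ _ /andP[v1B _] _ _; rewrite inE v1B nv1.
- have gp := mem_last (inl v1) p; move: lU => /=.
  case: (last _ _) gp => [a _|g gp]; first by rewrite inE andbF.
  rewrite !inr_unmatched => /forallP ng.
  by apply/forallP => a; rewrite agree ?ng ?neq_f.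
by exists M''; rewrite // cM'' cM'.
Qed.

Lemma alt_path_reverse M u p : alt_path M (u :: p) ->
  exists2 q, alt_path M (last u p :: q) & last (last u p) q = u.
Proof.
case/lastP: p => [|q y] ap; first by exists [::].
exists (rcons (rev q) u); rewrite !last_rcons //.
by have := alt_path_rev ap; rewrite rev_cons rev_rcons.
Qed.

Lemma max_matching_no_augmenting M u p : max_matching E W M ->
  u \in unmatched true M -> alt_path M (u :: p) -> last u p \notin unmatched false M.
Proof.
move=> [mM maxM] uU ap; apply/negP => lU.
have [M' mM' cM'] := augmenting_path mM uU ap lU.
by have := maxM M' mM'; rewrite cM' ltnn.
Qed.

Lemma alt_path_parity M b u p x0 : u \in unmatched b M -> alt_path M (u :: p) ->
  (forall i, i < size p -> inM M (nth x0 (u :: p) i) (nth x0 (u :: p) i.+1) = odd i) /\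
  (forall i, i <= size p -> isV (nth x0 (u :: p) i) = b (+) odd i).
Proof.
move=> uU [_ _ _ adj alt]; split.
  elim=> [|i IHi] lt_ip; first exact: unmatched_inM uU.
  move: (alt i x0 lt_ip); rewrite IHi ?(ltnW lt_ip) //=.
  by case: (odd i); case: (inM M _ _).
elim=> [|i IHi] le_ip; first by rewrite (unmatched_isV uU) addbF.
by rewrite (adjBp_isV (adj i x0 le_ip)) IHi ?(ltnW le_ip) //= addbN.
Qed.

Definition reach b M : {set vtx} :=
  [set x in Bp | Defs.decP (alt_reach E W M (unmatched b M) x)].

Lemma alt_path_Bp M p x : alt_path M p -> x \in p -> x \in Bp.
Proof. by case=> _ _ pB _ _; apply: (allP pB). Qed.

Lemma reachP b M x : reflect
  (exists u p, [/\ u \in unmatched b M, alt_path M (u :: p) & last u p = x])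
  (x \in reach b M).
Proof.
rewrite inE; apply: (iffP andP) => [[_ /decPP //]|h]; split; last exact/decPP.
by case: h => u [p [_ ap <-]]; apply: alt_path_Bp ap (mem_last u p).
Qed.

Lemma reach_Bp b M : reach b M \subset Bp.
Proof. by apply/subsetP => x /setIdP[]. Qed.

Lemma reach_mem b M u p x : u \in unmatched b M -> alt_path M (u :: p) ->
  x \in u :: p -> x \in reach b M.
Proof.
move=> uU ap xp; have ltk : index x (u :: p) < size (u :: p) by rewrite index_mem.
apply/reachP; exists u, (take (index x (u :: p)) p); split=> //.
  exact: alt_path_take (ltn0Sn _) ap.
rewrite (last_nth u) size_takel //.
by have := nth_take u (ltnSn (index x (u :: p))) (u :: p); rewrite nth_index // => <-.
Qed.

Lemma unmatched_reach b M : unmatched b M \subset reach b M.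
Proof.
apply/subsetP => u uU; apply: (reach_mem (p := [::]) uU) (mem_head _ _).
by split=> //=; rewrite andbT; move: uU; rewrite inE => /andP[].
Qed.

Lemma reach_extend b M x y : x \in reach b M -> adjBp x y ->
  inM M x y = (isV x != b) -> y \in reach b M.
Proof.
case/reachP=> u [p [uU ap <-]] xy exy.
have [yp|yp] := boolP (y \in u :: p); first exact: reach_mem uU ap yp.
apply/reachP; exists u, (rcons p y); split=> //; last by rewrite last_rcons.
rewrite -rcons_cons; apply: alt_path_rcons => //; first by case: (adjBp_Bp xy).
move=> x0 lt1p; have [inM_par isV_par] := alt_path_parity x0 uU ap.
have [k ek] : {k | size p = k.+1} by exists (size p).-1; rewrite prednK.
move: exy; rewrite !(last_nth x0) /= ek /= inM_par ?ek // => ->.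
by rewrite (isV_par k.+1) ?ek //=; case: (b); case: (odd k).
Qed.

Lemma reach_pred b M x : x \in reach b M -> x \notin unmatched b M ->
  exists2 z, z \in reach b M & adjBp z x /\ inM M z x = (isV z != b).
Proof.
case/reachP=> u [p [uU ap <-]] nU.
have [k ek] : {k | size p = k.+1}.
  by case: p ap nU => [|y p] _ /=; [rewrite uU | exists (size p)].
have [inM_par isV_par] := alt_path_parity u uU ap.
exists (nth u (u :: p) k); first by apply: reach_mem uU ap _; rewrite mem_nth //= ek.
rewrite (last_nth u) ek; split; first by case: ap => _ _ _ adj _; apply: adj; rewrite /= ek.
by rewrite inM_par ?isV_par ?ek //; case: (b); case: (odd k).
Qed.

Lemma reach_mate b M x y : matching M -> x \in reach b M -> inM M x y -> y \in reach b M.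
Proof.
move=> mM xR xy; have [xb|xb] := eqVneq (isV x) b; last first.
  by apply: reach_extend xR (inM_adjBp mM xy) _; rewrite xy xb.
have mx : matched M x by apply/existsP; exists y.
have [z zR [zx zxM]] := reach_pred xR (matched_unmatchedN b mx).
have zb : isV z != b by rewrite -xb (adjBp_isV zx); case: (isV z).
have xz : inM M x z by rewrite inMC zxM zb.
by rewrite -(inM_unique mM xz xy).
Qed.

Lemma reach_adj b M x y : matching M -> x \in reach b M -> isV x = b ->
  adjBp x y -> y \in reach b M.
Proof.
move=> mM xR xb xy; case xyM: (inM M x y); first exact: reach_mate mM xR xyM.
by apply: reach_extend xR xy _; rewrite xyM xb eqxx.
Qed.

Lemma reach_matched b M x : max_matching E W M -> x \in reach b M -> isV x = ~~ b ->
  matched M x.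
Proof.
move=> maxM /reachP[u [p [uU ap <-]]] xb; apply: contraT => nx.
have lU : last u p \in unmatched (~~ b) M.
  by rewrite inE xb eqxx nx (alt_path_Bp ap (mem_last u p)).
case: b uU lU {xb} => /= uU lU.
  by have := max_matching_no_augmenting maxM uU ap; rewrite lU.
have [q aq eq] := alt_path_reverse ap.
by have := max_matching_no_augmenting maxM lU aq; rewrite eq uU.
Qed.

Local Notation NBp X := (adjS E Bp X).

Definition side b : {set vtx} := [set x in Bp | isV x == b].

Lemma side_Bp b : side b \subset Bp.
Proof. by apply/subsetP => x /setIdP[]. Qed.

Lemma adjBpSP X y : X \subset Bp -> reflect (exists2 x, x \in X & adjBp x y) (y \in NBp X).
Proof.
move=> XB; rewrite inE; apply: (iffP andP) => [[yB /existsP[x /andP[xX xy]]]|[x xX xy]].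
  by exists x; rewrite // /adjBp (subsetP XB) ?yB.
by case/and3P: xy => _ yB xy; split=> //; apply/existsP; exists x; rewrite xX.
Qed.

Lemma adjBpS_side b X y : X \subset side b -> y \in NBp X -> isV y = ~~ b.
Proof.
move=> Xb; rewrite inE => /andP[_ /existsP[x /andP[/(subsetP Xb)]]].
by rewrite inE => /andP[_ /eqP <-] /adjv_isV.
Qed.

Lemma mate_imset_adj M X : matching M -> {in X, forall x, matched M x} ->
  mate M @: X \subset NBp X.
Proof.
move=> mM mX; apply/subsetP => _ /imsetP[x xX ->].
have /and3P[_ yB xy] := inM_adjBp mM (mate_inM (mX x xX)).
by rewrite inE yB; apply/existsP; exists x; rewrite xX.
Qed.

Lemma card_mate_imset M X : matching M -> {in X, forall x, matched M x} ->
  #|mate M @: X| = #|X|.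
Proof. by move=> mM mX; apply: card_in_imset => x y /mX mx /mX my; apply: mate_inj. Qed.

Lemma matched_setD_unmatched b M X : X \subset side b ->
  {in X :\: unmatched b M, forall x, matched M x}.
Proof.
move=> Xb x /setDP[xX]; have := subsetP Xb x xX; rewrite !inE => /andP[-> ->].
by rewrite negbK.
Qed.

Lemma card_le_adj_unmatched b M X : matching M -> X \subset side b ->
  #|X| <= #|NBp X| + #|unmatched b M|.
Proof.
move=> mM Xb; have mY := matched_setD_unmatched (M := M) Xb.
have le_N := subset_leq_card (subset_trans (mate_imset_adj mM mY) (adjSS E Bp (subsetDl X _))).
rewrite (card_mate_imset mM mY) in le_N.
have le_U := subset_leq_card (subsetIr X (unmatched b M)).
by rewrite -(cardsID (unmatched b M) X) addnC leq_add.
Qed.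

Lemma reach_sub_closed b M Z : unmatched b M \subset Z ->
  (forall z y, z \in Z -> isV z = b -> adjBp z y -> y \in Z) ->
  (forall z y, z \in Z -> isV z != b -> inM M z y -> y \in Z) ->
  reach b M \subset Z.
Proof.
move=> UZ adjZ mateZ; apply/subsetP => x /reachP[u [p [uU ap <-]]].
have [inM_par isV_par] := alt_path_parity u uU ap.
suff: forall i, i <= size p -> nth u (u :: p) i \in Z.
  by move/(_ (size p) (leqnn _)); rewrite -last_nth.
elim=> [|i IHi] lt_ip; first exact: (subsetP UZ).
have zZ := IHi (ltnW lt_ip).
have [zb|zb] := eqVneq (isV (nth u (u :: p) i)) b.
  by apply: adjZ zZ zb _; case: ap => _ _ _ adj _; apply: adj.
apply: mateZ zZ (zb) _; rewrite inM_par //.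
by move: zb; rewrite isV_par ?(ltnW lt_ip) //; case: (b); case: (odd i).
Qed.

Lemma reach_sub_tight b M X : matching M -> X \subset side b ->
  #|NBp X| + #|unmatched b M| <= #|X| -> reach b M \subset X :|: NBp X.
Proof.
move=> mM Xb le_X; set U := unmatched b M.
have mY := matched_setD_unmatched (M := M) Xb.
have sY := subset_trans (mate_imset_adj mM mY) (adjSS E Bp (subsetDl X U)).
have le_N := subset_leq_card sY; rewrite (card_mate_imset mM mY) in le_N.
have le_U := subset_leq_card (subsetIr X U); have eX := cardsID U X.
(* the counting is tight: all of U lies in X, and mate maps X \ U onto NBp X *)
have UX : U \subset X.
  apply/setIidPr/eqP; rewrite eqEcard subsetIr /= -(leq_add2r #|X :\: U|) eX.
  by apply: leq_trans le_X; rewrite addnC leq_add2r.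
have eN : mate M @: (X :\: U) = NBp X.
  apply/eqP; rewrite eqEcard sY (card_mate_imset mM mY) /= -(leq_add2r #|U|).
  by apply: (leq_trans le_X); rewrite -eX addnC leq_add2l.
have XB := subset_trans Xb (side_Bp b).
apply: (reach_sub_closed (Z := X :|: NBp X)) => [|z y /setUP[zX|zN] zb zy|z y /setUP[zX|zN] zb zy].
- exact: subset_trans UX (subsetUl _ _).
- by rewrite inE; apply/orP; right; apply/adjBpSP => //; exists z.
- by move: zb; rewrite (adjBpS_side Xb zN); case: (b).
- by move: zb; have := subsetP Xb z zX; rewrite inE => /andP[_ ->].
rewrite -eN in zN; case/imsetP: zN => x xY ez.
have xz : inM M z x by rewrite ez inMC mate_inM ?mY.
by rewrite -(inM_unique mM xz zy) inE (setDP xY).1.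
Qed.

Definition even_reach b M : {set vtx} := [set x in reach b M | isV x == b].

Lemma even_reach_side b M : even_reach b M \subset side b.
Proof.
apply/subsetP => x /setIdP[xR xb]; apply/setIdP; split=> //.
exact: subsetP (reach_Bp b M) x xR.
Qed.

Lemma reachE b M : matching M -> reach b M = even_reach b M :|: NBp (even_reach b M).
Proof.
move=> mM; have AB := subset_trans (even_reach_side b M) (side_Bp b).
apply/setP => x; apply/idP/setUP => [xR|[|/(adjBpSP _ AB)[z]]].
- have [xb|xb] := eqVneq (isV x) b; first by left; apply/setIdP; rewrite xb.
  have [|z zR [zx _]] := reach_pred xR; first by apply: contra xb => /unmatched_isV ->.
  right; apply/(adjBpSP _ AB); exists z => //; apply/setIdP; split=> //.
  by move: xb; rewrite (adjBp_isV zx); case: (isV z); case: (b).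
- by case/setIdP.
- by case/setIdP=> zR /eqP zb zx; apply: reach_adj mM zR zb zx.
Qed.

Lemma card_even_reach b M : max_matching E W M ->
  #|even_reach b M| = #|NBp (even_reach b M)| + #|unmatched b M|.
Proof.
move=> maxM; have mM := maxM.1; set A := even_reach b M; set U := unmatched b M.
have UA : U \subset A.
  apply/subsetP => u uU; apply/setIdP; split; first exact: subsetP (unmatched_reach b M) u uU.
  by rewrite (unmatched_isV uU).
have NR y : y \in NBp A -> y \in reach b M /\ isV y = ~~ b.
  move=> yN; split; last exact: adjBpS_side (even_reach_side b M) yN.
  by rewrite reachE //; apply/setUP; right.
have mN : {in NBp A, forall y, matched M y}.
  by move=> y /NR[yR yb]; apply: reach_matched maxM yR yb.
(* mate maps the neighbours of A injectively into the matched part of A *)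
have le_N : #|NBp A| <= #|A :\: U|.
  rewrite -(card_mate_imset mM mN); apply: subset_leq_card.
  apply/subsetP => _ /imsetP[y yN ->]; have [yR yb] := NR y yN.
  have yx := mate_inM (mN y yN); apply/setDP; split; last first.
    by apply: matched_unmatchedN; apply/existsP; exists y; rewrite inMC.
  apply/setIdP; split; first exact: reach_mate mM yR yx.
  by rewrite (adjBp_isV (inM_adjBp mM yx)) yb negbK.
apply/eqP; rewrite eqn_leq card_le_adj_unmatched ?even_reach_side //=.
by rewrite -(cardsID U A) (setIidPr UA) addnC leq_add2l.
Qed.

Lemma reach_subset b M1 M2 : max_matching E W M1 -> max_matching E W M2 ->
  reach b M2 \subset reach b M1.
Proof.
move=> max1 max2; have le_U : #|unmatched b M2| <= #|unmatched b M1|.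
  have := card_le_adj_unmatched max1.1 (even_reach_side b M2).
  by rewrite (card_even_reach b max2) leq_add2l.
rewrite (reachE b max1.1); apply: reach_sub_tight max2.1 (even_reach_side b M1) _.
by rewrite (card_even_reach b max1) leq_add2l.
Qed.

Lemma reach_max_matching b M1 M2 : max_matching E W M1 -> max_matching E W M2 ->
  reach b M1 = reach b M2.
Proof. by move=> max1 max2; apply/eqP; rewrite eqEsubset !reach_subset. Qed.

End Matching.

Section CoarseDecomposition.
Variables (V F : finType) (E : V -> F -> bool) (W : {set V}).
Local Notation vtx := (vtx V F).
Implicit Types (M : {set (V * F)}) (S : {set vtx}) (x y : vtx).

Lemma max_matching_exists : exists M, max_matching E W M.
Proof.
pose P M := Defs.decP (matching E W M).
have P0 : P set0 by apply/decPP; split=> [p|p q]; rewrite inE.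
have [M /decPP mM maxM] := arg_maxnP (fun M : {set V * F} => #|M|) P0.
by exists M; split=> // M' /decPP/maxM.
Qed.

Lemma perfect_matching_hall_balanced M S : matching E W M ->
  (forall x, x \in S -> matched M x /\ mate M x \in S) -> hall_balanced E S.
Proof.
move=> mM mS; have mateS x : x \in S -> adjv E x (mate M x).
  by case/mS => /mate_inM /(inM_adjBp mM) /and3P[].
have le_card (A B : {set vtx}) : A \subset S -> {in A, forall x, mate M x \in B} -> #|A| <= #|B|.
  move=> AS AB; rewrite -(card_mate_imset mM (X := A)); last by move=> x /(subsetP AS) /mS[].
  by apply/subset_leq_card/subsetP => _ /imsetP[x xA ->]; apply: AB.
have mate_side x : x \in S -> (mate M x \in S) && (isV (mate M x) == ~~ isV x).
  by move=> xS; rewrite (mS x xS).2 (adjv_isV (mateS x xS)) eqxx.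
split.
  apply/eqP; rewrite eqn_leq !le_card ?Fside_sub ?Vside_sub // => x /setIdP[xS xs];
    by have /andP[mxS /eqP mxs] := mate_side x xS; rewrite inE mxS /= ?isFE mxs ?negbK // -isFE.
move=> Y YF; apply: le_card => [|x xY]; first exact: subset_trans YF (Fside_sub S).
have [xS _] := setIdP (subsetP YF x xY).
by rewrite inE (mS x xS).2; apply/existsP; exists x; rewrite xY mateS.
Qed.

Lemma TIE M : TI E W M = reach E W true M.
Proof. by rewrite /TI VunE. Qed.

Lemma TOE M : TO E W M = reach E W false M.
Proof. by rewrite /TO (FunE W). Qed.

Lemma TC_matched M x : max_matching E W M -> x \in TC E W M -> matched M x.
Proof.
move=> maxM /setDP[xB]; rewrite in_setU negb_or TIE TOE => /andP[nI nO].
apply: contraT => nx; have xU : x \in unmatched W (isV x) M by rewrite inE xB eqxx nx.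
have := subsetP (unmatched_reach E W (isV x) M) x xU.
by case: (isV x); [rewrite (negbTE nI) | rewrite (negbTE nO)].
Qed.

Lemma TC_mate M x y : max_matching E W M -> x \in TC E W M -> inM M x y -> y \in TC E W M.
Proof.
move=> [mM _] /setDP[_]; rewrite in_setU negb_or TIE TOE => /andP[nI nO] xy.
have yB := (adjBp_Bp (inM_adjBp mM xy)).2.
have back b : y \in reach E W b M -> x \in reach E W b M.
  by move=> yR; apply: reach_mate mM yR _; rewrite inMC.
by apply/setDP; rewrite in_setU negb_or TIE TOE (contra (back true) nI) (contra (back false) nO).
Qed.

Lemma TC_hall_balanced M : max_matching E W M -> hall_balanced E (TC E W M).
Proof.
move=> maxM; apply: perfect_matching_hall_balanced maxM.1 _ => x xT.
by have mx := TC_matched maxM xT; split; last exact: TC_mate maxM xT (mate_inM mx).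
Qed.

Lemma coarse_decomposition_max_matching M1 M2 :
  max_matching E W M1 -> max_matching E W M2 ->
  [/\ TI E W M1 = TI E W M2, TO E W M1 = TO E W M2 & TC E W M1 = TC E W M2].
Proof.
move=> max1 max2; rewrite /TC !TIE !TOE.
by rewrite (reach_max_matching true max1 max2) (reach_max_matching false max1 max2).
Qed.

End CoarseDecomposition.

Theorem corollary11 (V F : finType) (E : V -> F -> bool) (W : {set V}) :
  [/\ (forall M : {set (V * F)}, max_matching E W M ->
         graph_self_contained E (TC E W M)),
      (exists out : dcg V F, alg3_out E W out)
    & (forall out1 out2 : dcg V F,
         alg3_out E W out1 -> alg3_out E W out2 -> out1 = out2)].
Proof.
split.
- by move=> M /TC_hall_balanced/graph_self_containedE.
- have [M maxM] := max_matching_exists E W.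
  have [outC runC] := alg1_run_exists (TC E W M) set0 set0 (TC_hall_balanced maxM).
  by exists (alg3_build E W M outC), M, outC; split=> //; apply/alg1_out0E.
- move=> _ _ [M1 [o1 [max1 /alg1_out0E r1 ->]]] [M2 [o2 [max2 /alg1_out0E r2 ->]]].
  have [eI eO eC] := coarse_decomposition_max_matching max1 max2.
  rewrite eC in r1; have bal := TC_hall_balanced max2.
  by rewrite /alg3_build eI eO eC (alg1_run_unique bal r1 r2).
Qed.
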